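(* Let $\Psi^P\subset\mathbb C\times\mathbb C\times\mathbb C^2\times\mathbb C^3$ be the set of solutions $(d,r,\bar t,\bar x)$ of the system $$\sum_{i=1}^3(P_0x_i-P_i)^2-d^2P_0^2=0,\quad n_i(P_0x_j-P_j)-n_j(P_0x_i-P_i)=0\ (1\le i<j\le3),\quad r\,P_0\,h\,\beta-1=0,$$ (where $P_i,n_i,h,\beta$ are evaluated at $\bar t$), and let $\pi_1^P(d,r,\bar t,\bar x)=(d,\bar x)$. Then $\mathcal O_d(\Sigma)$ equals the Zariski closure of $\pi_1^P(\Psi^P)$.
   Context: $f\in\mathbb C[y_1,y_2,y_3]$ irreducible defines the surface $\Sigma$; $f_i=\partial f/\partial y_i$, $h_{\rm imp}=\sum f_i^2$, not identically zero on $\Sigma$. The generic offset $\mathcal O_d(\Sigma)\subset\mathbb C^4$ is the Zariski closure of the projection to $(d,\bar x)$ of the solutions $(d,\bar x,\bar y,u)$ of: $f(\bar y)=0$; $f_i(\bar y)(x_j-y_j)-f_j(\bar y)(x_i-y_i)=0$ ($i<j$); $\sum(x_i-y_i)^2-d^2=0$; $u\,h_{\rm imp}(\bar y)-1=0$. $P(\bar t)=(P_1/P_0,P_2/P_0,P_3/P_0)$, $\bar t=(t_1,t_2)$, $P_i\in\mathbb C[\bar t]$, $\gcd(P_0,\dots,P_3)=1$, is a (not necessarily proper) rational parametrization of $\Sigma$ (image Zariski dense). Write $\frac{\partial P}{\partial t_1}\wedge\frac{\partial P}{\partial t_2}=(A_1/A_0,A_2/A_0,A_3/A_0)$ ($\wedge$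 the cross product, $A_i\in\mathbb C[\bar t]$), $n_i=A_i/\gcd(A_1,A_2,A_3)$, $h=n_1^2+n_2^2+n_3^2$, and fix $\mu\in\mathbb N$ and a nonzero $\beta\in\mathbb C[\bar t]$ with $\gcd(\beta,P_0)=1$ such that $f_i(P(\bar t))=\beta(\bar t)P_0(\bar t)^{-\mu}n_i(\bar t)$ for $i=1,2,3$. *)

(* Polynomials in several variables are represented by
   syntactic polynomial expressions (terms) over a field R, evaluated as
   polynomial functions R^n -> R.  Over an infinite field the map from the
   polynomial ring R[X_0..X_{n-1}] to polynomial functions is an injective
   ring morphism, so equality / divisibility / irreducibility of polynomials
   may be tested on the associated functions. *)
From HB Require Import structures.
From mathcomp Require Import all_boot all_order all_algebra.
Set Implicit Arguments. Unset Strict Implicit. Unset Printing Implicit Defensive.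
Import Order.TTheory GRing.Theory Num.Theory.
Local Open Scope ring_scope.

Inductive mpoly (R : Type) (n : nat) : Type :=
| MC of R
| MX of 'I_n
| MAdd of mpoly R n & mpoly R n
| MMul of mpoly R n & mpoly R n.
Arguments MC {R n}. Arguments MX {R n}.

Section MPoly.
Variables (R : numClosedFieldType) (n : nat).

Fixpoint meval (p : mpoly R n) (x : 'I_n -> R) : R :=
  match p with
  | MC c => c
  | MX i => x i
  | MAdd p q => meval p x + meval q x
  | MMul p q => meval p x * meval q x
  end.

Fixpoint mderiv (i : 'I_n) (p : mpoly R n) : mpoly R n :=
  match p with
  | MC _ => MC 0
  | MX j => MC (if j == i then 1 else 0)
  | MAdd p q => MAdd (mderiv i p) (mderiv i q)
  | MMul p q => MAdd (MMul (mderiv i p) q) (MMul p (mderiv i q))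
  end.

Definition msub (p q : mpoly R n) : mpoly R n := MAdd p (MMul (MC (-1)) q).

Definition mconst (p : mpoly R n) : Prop := exists c : R, forall x, meval p x = c.
Definition mzero (p : mpoly R n) : Prop := forall x, meval p x = 0.
Definition mdvd (a b : mpoly R n) : Prop :=
  exists q : mpoly R n, forall x, meval b x = meval a x * meval q x.
(* irreducible: nonzero nonunit (= nonconstant) with only trivial factorizations *)
Definition mirreducible (f : mpoly R n) : Prop :=
  ~ mconst f /\
  forall g h : mpoly R n, (forall x, meval f x = meval g x * meval h x) ->
    mconst g \/ mconst h.

Definition zclosure (S : ('I_n -> R) -> Prop) (x : 'I_n -> R) : Prop :=
  forall p : mpoly R n, (forall y, S y -> meval p y = 0) -> meval p x = 0.
End MPoly.

Section Offset.
Variable R : numClosedFieldType.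

Definition dcoord (z : 'I_4 -> R) : R := z ord0.
Definition xcoord (z : 'I_4 -> R) (i : 'I_3) : R := z (lift ord0 i).

Definition himp (f : mpoly R 3) (y : 'I_3 -> R) : R :=
  \sum_(i < 3) (meval (mderiv i f) y) ^+ 2.

Definition offset_proj (f : mpoly R 3) (z : 'I_4 -> R) : Prop :=
  exists (y : 'I_3 -> R) (u : R),
    [/\ meval f y = 0,
        forall i j : 'I_3, (i < j)%N ->
          meval (mderiv i f) y * (xcoord z j - y j)
          - meval (mderiv j f) y * (xcoord z i - y i) = 0,
        \sum_(i < 3) (xcoord z i - y i) ^+ 2 - dcoord z ^+ 2 = 0
      & u * himp f y - 1 = 0].

Definition generic_offset (f : mpoly R 3) : ('I_4 -> R) -> Prop :=
  zclosure (offset_proj f).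

(* numerator of d/dt_k (P_i / P_0):  dP_i/dt_k * P_0 - P_i * dP_0/dt_k *)
Definition Dnum (P0 : mpoly R 2) (Pv : 'I_3 -> mpoly R 2) (i : 'I_3) (k : 'I_2)
  : mpoly R 2 :=
  msub (MMul (mderiv k (Pv i)) P0) (MMul (Pv i) (mderiv k P0)).

(* dP/dt_1 /\ dP/dt_2 = (A_1/A_0, A_2/A_0, A_3/A_0) with A_0 = P_0^4 and
   A_i the following polynomials (cross product of the numerators) *)
Definition Acomp (P0 : mpoly R 2) (Pv : 'I_3 -> mpoly R 2) (i : 'I_3)
  : mpoly R 2 :=
  let u j := Dnum P0 Pv j ord0 in
  let v j := Dnum P0 Pv j (lift ord0 ord0) in
  let j1 : 'I_3 := inord ((i + 1) %% 3) in
  let j2 : 'I_3 := inord ((i + 2) %% 3) in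
  msub (MMul (u j1) (v j2)) (MMul (u j2) (v j1)).

Definition Ppt (P0 : mpoly R 2) (Pv : 'I_3 -> mpoly R 2) (t : 'I_2 -> R)
  : 'I_3 -> R := fun i => meval (Pv i) t / meval P0 t.

Definition psi_proj (P0 : mpoly R 2) (Pv n : 'I_3 -> mpoly R 2)
  (beta : mpoly R 2) (z : 'I_4 -> R) : Prop :=
  exists (r : R) (t : 'I_2 -> R),
    let p0 := meval P0 t in
    let w i := p0 * xcoord z i - meval (Pv i) t in
    let h := \sum_(i < 3) (meval (n i) t) ^+ 2 in
    [/\ \sum_(i < 3) (w i) ^+ 2 - dcoord z ^+ 2 * p0 ^+ 2 = 0,
        forall i j : 'I_3, (i < j)%N ->
          meval (n i) t * w j - meval (n j) t * w i = 0
      & r * p0 * h * meval beta t - 1 = 0].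
End Offset.

From HB Require Import structures.
From mathcomp Require Import all_boot all_order all_algebra.
From mathcomp Require Import ring.
From Stdlib Require Import Classical FunctionalExtensionality.
Import Order.TTheory GRing.Theory Num.Theory.
Local Open Scope ring_scope.
Set Implicit Arguments. Unset Strict Implicit. Unset Printing Implicit Defensive.

(* At a parameter t where P0, beta and h do not vanish, f_i(P(t)) is a nonzero
   multiple of n_i(t), so the equations of Psi^P are, after clearing P0, those
   of the offset system at the surface point y = P(t); this gives
   pi_1^P(Psi^P) inside the offset system's image.  Conversely a point of the
   offset system is (d, y + lam grad f(y)) with d^2 = lam^2 h_imp(y).  Writing
   a polynomial p(d, x) at such points as A(y) + d B(y), vanishing on
   pi_1^P(Psi^P) at both signs of d forces A and (when lam <> 0) B to vanish
   on the parameter points where P0 beta h <> 0; these are Zariski dense in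
   Sigma since P0 beta h is a nonzero polynomial. *)

Lemma even_odd_eq0 (R : numDomainType) (a b d : R) :
  a + d * b = 0 -> a + (- d) * b = 0 -> a = 0 /\ d * b = 0.
Proof.
move=> ep em.
have a2 : a *+ 2 = (a + d * b) + (a + (- d) * b) by ring.
move/eqP: a2; rewrite ep em addr0 mulrn_eq0 /= => /eqP a0.
by split=> //; move: ep; rewrite a0 add0r.
Qed.

Section PolynomialFunctions.
Variable R : numClosedFieldType.

Lemma poly_fun_eq0 (p : {poly R}) : (forall s, p.[s] = 0) -> p = 0.
Proof.
move=> p0; apply: (@roots_geq_poly_eq0 _ p [seq i%:R | i <- iota 0 (size p)]).
- by apply/allP => _ /mapP [i _ ->]; rewrite /root p0.
- by rewrite map_inj_uniq ?iota_uniq // => i j /eqP; rewrite eqr_nat => /eqP.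
- by rewrite size_map size_iota.
Qed.

Variable n : nat.

Fixpoint mline (a b : 'I_n -> R) (p : mpoly R n) : {poly R} :=
  match p with
  | MC c => c%:P
  | MX i => (a i)%:P + (b i)%:P * 'X
  | MAdd p q => mline a b p + mline a b q
  | MMul p q => mline a b p * mline a b q
  end.

Lemma horner_mline a b p s : (mline a b p).[s] = meval p (fun i => a i + b i * s).
Proof.
elim: p => [c|i|p IHp q IHq|p IHp q IHq] /=.
- by rewrite hornerC.
- by rewrite hornerD hornerC hornerCM hornerX.
- by rewrite hornerD IHp IHq.
- by rewrite hornerM IHp IHq.
Qed.

Lemma mzero_mul (p q : mpoly R n) :
  (forall x, meval p x * meval q x = 0) -> ~ mzero q -> mzero p.
Proof.
move=> pq0 q_neq0 x.
have [y qy] : exists y, meval q y != 0.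
  apply: NNPP => no_y; apply: q_neq0 => y.
  by apply: NNPP => qy; apply: no_y; exists y; apply/eqP.
pose b i := y i - x i.
have /eqP : mline x b p * mline x b q = 0.
  by apply: poly_fun_eq0 => s; rewrite hornerM !horner_mline pq0.
rewrite mulf_eq0 => /orP [/eqP p0 | /eqP q0].
- move: (horner_mline x b p 0); rewrite p0 horner0.
  suff -> : (fun i => x i + b i * 0) = x by [].
  by apply: functional_extensionality => i; rewrite mulr0 addr0.
- move: (horner_mline x b q 1); rewrite q0 horner0.
  suff -> : (fun i => x i + b i * 1) = y by move=> q_y0; rewrite -q_y0 eqxx in qy.
  by apply: functional_extensionality => i; rewrite mulr1 addrC subrK.
Qed.

Definition msum (m : nat) (F : 'I_m -> mpoly R n) : mpoly R n :=
  \big[@MAdd R n/MC 0]_(i < m) F i.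

Lemma meval_msum m (F : 'I_m -> mpoly R n) x :
  meval (msum F) x = \sum_(i < m) meval (F i) x.
Proof. by rewrite /msum (big_morph (fun p => meval p x) (id1 := 0) (op1 := +%R)). Qed.

Fixpoint mexp (p : mpoly R n) (k : nat) : mpoly R n :=
  if k is k.+1 then MMul p (mexp p k) else MC 1.

Lemma meval_mexp p k x : meval (mexp p k) x = meval p x ^+ k.
Proof. by elim: k => [|k IH] /=; rewrite ?expr0 // exprS IH. Qed.

Lemma zclosure_le (S T : ('I_n -> R) -> Prop) :
  (forall p : mpoly R n, (forall y, T y -> meval p y = 0) ->
     forall y, S y -> meval p y = 0) ->
  forall z, zclosure S z -> zclosure T z.
Proof. by move=> ST z Sz p pT; apply: Sz; apply: ST. Qed.

Lemma zclosureS (S T : ('I_n -> R) -> Prop) :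
  (forall y, S y -> T y) -> forall z, zclosure S z -> zclosure T z.
Proof. by move=> ST; apply: zclosure_le => p pT y /ST; apply: pT. Qed.

End PolynomialFunctions.

Section ClearDenominators.
Variables (R : numClosedFieldType) (k m : nat) (P0 : mpoly R k) (Pv : 'I_m -> mpoly R k).

Fixpoint mclear_denom (q : mpoly R m) : mpoly R k * nat :=
  match q with
  | MC c => (MC c, 0%N)
  | MX i => (Pv i, 1%N)
  | MAdd a b =>
      let (Na, ka) := mclear_denom a in let (Nb, kb) := mclear_denom b in
      (MAdd (MMul Na (mexp P0 kb)) (MMul Nb (mexp P0 ka)), (ka + kb)%N)
  | MMul a b =>
      let (Na, ka) := mclear_denom a in let (Nb, kb) := mclear_denom b in
      (MMul Na Nb, (ka + kb)%N)
  end.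

Lemma mclear_denomE q t : meval P0 t != 0 ->
  meval (mclear_denom q).1 t
  = meval q (fun i => meval (Pv i) t / meval P0 t) * meval P0 t ^+ (mclear_denom q).2.
Proof.
move=> P0t; elim: q => [c|i|a IHa b IHb|a IHa b IHb] /=.
- by rewrite mulr1.
- by rewrite divfK.
- case: (mclear_denom a) IHa => Na ka /=; case: (mclear_denom b) IHb => Nb kb /= -> ->.
  by rewrite !meval_mexp exprD; ring.
- case: (mclear_denom a) IHa => Na ka /=; case: (mclear_denom b) IHb => Nb kb /= -> ->.
  by rewrite exprD; ring.
Qed.

End ClearDenominators.

(* [msplit D2 S p = (A, B)] with p(d, S(y)) = A(y) + d B(y) whenever d^2 = D2(y):
   p is expanded in the first variable d, reducing d^2 to D2. *)
Section SplitFirstVariable.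
Variables (R : numClosedFieldType) (k m : nat) (D2 : mpoly R k) (S : 'I_m -> mpoly R k).

Fixpoint msplit (p : mpoly R m.+1) : mpoly R k * mpoly R k :=
  match p with
  | MC c => (MC c, MC 0)
  | MX j => if unlift ord0 j is Some i then (S i, MC 0) else (MC 0, MC 1)
  | MAdd p q =>
      let (a1, b1) := msplit p in let (a2, b2) := msplit q in
      (MAdd a1 a2, MAdd b1 b2)
  | MMul p q =>
      let (a1, b1) := msplit p in let (a2, b2) := msplit q in
      (MAdd (MMul a1 a2) (MMul D2 (MMul b1 b2)), MAdd (MMul a1 b2) (MMul b1 a2))
  end.

Lemma msplitE p (z : 'I_m.+1 -> R) (y : 'I_k -> R) :
  z ord0 ^+ 2 = meval D2 y -> (forall i, z (lift ord0 i) = meval (S i) y) ->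
  meval p z = meval (msplit p).1 y + z ord0 * meval (msplit p).2 y.
Proof.
move=> zD2 zS; elim: p => [c|j|p IHp q IHq|p IHp q IHq] /=.
- by rewrite mulr0 addr0.
- by case: unliftP => [i ->|->] /=; rewrite ?zS; ring.
- by case: (msplit p) IHp => a1 b1 /= ->; case: (msplit q) IHq => a2 b2 /= ->; ring.
- case: (msplit p) IHp => a1 b1 /= ->; case: (msplit q) IHq => a2 b2 /= ->.
  by rewrite -zD2; ring.
Qed.

End SplitFirstVariable.

Section ParametrizedOffset.
Variables (R : numClosedFieldType) (f : mpoly R 3) (P0 : mpoly R 2)
  (Pv n : 'I_3 -> mpoly R 2) (mu : nat) (beta : mpoly R 2).

Hypothesis param_dense : forall y,
  zclosure (fun y' => exists t, meval P0 t != 0 /\ (forall i, y' i = Ppt P0 Pv t i)) y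
  <-> meval f y = 0.
Hypothesis grad_param : forall i t, meval P0 t != 0 ->
  meval (mderiv i f) (Ppt P0 Pv t) * meval P0 t ^+ mu = meval beta t * meval (n i) t.
Hypothesis himp_generic : exists y, meval f y = 0 /\ himp f y != 0.
Hypothesis P0_neq0 : ~ mzero P0.
Hypothesis beta_neq0 : ~ mzero beta.

Definition himp_poly : mpoly R 3 := msum (fun i => MMul (mderiv i f) (mderiv i f)).
Definition hpar : mpoly R 2 := msum (fun i => MMul (n i) (n i)).
Definition regular_par : mpoly R 2 := MMul P0 (MMul beta hpar).
Definition grad_scale (t : 'I_2 -> R) : R := meval beta t / meval P0 t ^+ mu.

Lemma meval_himp_poly y : meval himp_poly y = himp f y.
Proof. by rewrite meval_msum; apply: eq_bigr => i _; rewrite /= expr2. Qed.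

Lemma meval_hpar t : meval hpar t = \sum_(i < 3) meval (n i) t ^+ 2.
Proof. by rewrite meval_msum; apply: eq_bigr => i _; rewrite /= expr2. Qed.

Lemma regular_parE t : (meval regular_par t != 0)
  = [&& meval P0 t != 0, meval beta t != 0 & meval hpar t != 0].
Proof. by rewrite /= !mulf_eq0 !negb_or. Qed.

Lemma P0_Ppt_sub t i x : meval P0 t != 0 ->
  meval P0 t * (x - Ppt P0 Pv t i) = meval P0 t * x - meval (Pv i) t.
Proof. by move=> P0t; rewrite mulrBr /Ppt mulrCA mulfV // mulr1. Qed.

Lemma Ppt_on_surface t : meval P0 t != 0 -> meval f (Ppt P0 Pv t) = 0.
Proof. by move=> P0t; apply/param_dense => p; apply; exists t. Qed.

Lemma grad_Ppt i t : meval P0 t != 0 ->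
  meval (mderiv i f) (Ppt P0 Pv t) = grad_scale t * meval (n i) t.
Proof.
move=> P0t; apply: (mulIf (expf_neq0 mu P0t)).
by rewrite grad_param // /grad_scale mulrAC divfK ?expf_neq0.
Qed.

Lemma himp_Ppt t : meval P0 t != 0 ->
  himp f (Ppt P0 Pv t) = grad_scale t ^+ 2 * meval hpar t.
Proof.
move=> P0t; rewrite meval_hpar mulr_sumr; apply: eq_bigr => i _.
by rewrite grad_Ppt // exprMn.
Qed.

Lemma himp_Ppt_neq0 t : meval regular_par t != 0 -> himp f (Ppt P0 Pv t) != 0.
Proof.
rewrite regular_parE => /and3P [P0t bt ht].
by rewrite himp_Ppt // mulf_neq0 // expf_neq0 // mulf_neq0 // invr_neq0 // expf_neq0.
Qed.

Lemma hpar_neq0 : ~ mzero hpar.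
Proof.
move=> h0; have [y [fy]] := himp_generic; apply/negP/negPn/eqP.
rewrite -meval_himp_poly; move/param_dense: fy; apply=> _ [t [P0t /functional_extensionality ->]].
by rewrite meval_himp_poly himp_Ppt // h0 mulr0.
Qed.

Lemma vanish_on_surface (q : mpoly R 3) :
  (forall t, meval regular_par t != 0 -> meval q (Ppt P0 Pv t) = 0) ->
  forall y, meval f y = 0 -> meval q y = 0.
Proof.
move=> q_reg y /param_dense; apply=> _ [t [P0t /functional_extensionality ->]].
have regular_par_neq0 : ~ mzero regular_par.
  move=> reg0; apply: P0_neq0; apply: (mzero_mul (q := MMul beta hpar)) => // bh0.
  by apply: beta_neq0; apply: (mzero_mul (q := hpar)) => //; exact: hpar_neq0.
have num0 : mzero (mclear_denom P0 Pv q).1.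
  apply: (mzero_mul (q := regular_par)) => // x.
  have [->|reg] := eqVneq (meval regular_par x) 0; first by rewrite mulr0.
  have P0x : meval P0 x != 0 by move: reg; rewrite regular_parE => /and3P [].
  by rewrite mclear_denomE // [meval q _]q_reg // !mul0r.
apply: (mulIf (expf_neq0 (mclear_denom P0 Pv q).2 P0t)).
by rewrite mul0r -mclear_denomE.
Qed.

Lemma psi_proj_sub_offset z : psi_proj P0 Pv n beta z -> offset_proj f z.
Proof.
case=> r [t] /= [dist cross unit].
have reg : meval regular_par t != 0.
  have /eqP : r * meval regular_par t - 1 = 0 by rewrite -[RHS]unit /= meval_hpar; ring.
  by rewrite subr_eq0; apply: contraL => /eqP ->; rewrite mulr0 eq_sym oner_eq0.
have P0t : meval P0 t != 0 by move: reg; rewrite regular_parE => /and3P [].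
exists (Ppt P0 Pv t), (himp f (Ppt P0 Pv t))^-1; split.
- exact: Ppt_on_surface.
- move=> i j ij; apply: (mulfI P0t); rewrite mulr0 !grad_Ppt //.
  transitivity (grad_scale t * (meval (n i) t * (meval P0 t * (xcoord z j - Ppt P0 Pv t j))
                 - meval (n j) t * (meval P0 t * (xcoord z i - Ppt P0 Pv t i)))); first by ring.
  by rewrite !P0_Ppt_sub // cross // mulr0.
- apply: (mulfI (expf_neq0 2 P0t)); rewrite mulr0 -[RHS]dist mulrBr mulr_sumr.
  rewrite (eq_bigr (fun i => (meval P0 t * xcoord z i - meval (Pv i) t) ^+ 2)) => [|i _].
    by rewrite mulrC.
  by rewrite -exprMn P0_Ppt_sub.
- by rewrite mulVf ?subrr // himp_Ppt_neq0.
Qed.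

Definition offset_point (d : R) (x : 'I_3 -> R) : 'I_4 -> R :=
  fun j => if unlift ord0 j is Some i then x i else d.

Lemma dcoord_offset_point d x : dcoord (offset_point d x) = d.
Proof. by rewrite /dcoord /offset_point unlift_none. Qed.

Lemma xcoord_offset_point d x i : xcoord (offset_point d x) i = x i.
Proof. by rewrite /xcoord /offset_point liftK. Qed.

Lemma psi_proj_normal_point (lam d : R) t : meval regular_par t != 0 ->
  d ^+ 2 = lam ^+ 2 * himp f (Ppt P0 Pv t) ->
  psi_proj P0 Pv n beta
    (offset_point d (fun i => Ppt P0 Pv t i + lam * meval (mderiv i f) (Ppt P0 Pv t))).
Proof.
move=> reg hd; have P0t : meval P0 t != 0 by move: reg; rewrite regular_parE => /and3P [].
exists (meval regular_par t)^-1, t => /=.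
set x := offset_point _ _.
have w_eq i : meval P0 t * xcoord x i - meval (Pv i) t
              = meval P0 t * lam * grad_scale t * meval (n i) t.
  rewrite -P0_Ppt_sub // xcoord_offset_point grad_Ppt // addrAC subrr add0r.
  by rewrite !mulrA.
split.
- rewrite dcoord_offset_point hd himp_Ppt // meval_hpar.
  under eq_bigr do rewrite w_eq exprMn.
  by rewrite -mulr_sumr; ring.
- by move=> i j _; rewrite !w_eq; ring.
- rewrite -meval_hpar -!mulrA.
  rewrite [X in _ * X](_ : _ = meval regular_par t) ?mulVf ?subrr //=.
  by ring.
Qed.

Lemma offset_proj_normal z : offset_proj f z ->
  exists y lam, [/\ meval f y = 0,
    forall i, xcoord z i = y i + lam * meval (mderiv i f) y
    & dcoord z ^+ 2 = lam ^+ 2 * himp f y].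
Proof.
case=> y [u [fy cross dist unit]].
have [k grad_k] : exists k, meval (mderiv k f) y != 0.
  apply: NNPP => no_k; move: unit; rewrite /himp big1 ?mulr0 ?sub0r => [/eqP|i _].
    by rewrite oppr_eq0 oner_eq0.
  by apply: NNPP => fi; apply: no_k; exists i; apply: contra_not_neq fi => ->; rewrite expr0n.
pose lam := (xcoord z k - y k) / meval (mderiv k f) y.
have xz i : xcoord z i = y i + lam * meval (mderiv i f) y.
  rewrite -[LHS](subrK (y i)) addrC; congr (_ + _); apply: (mulIf grad_k).
  rewrite /lam mulrAC divfK //.
  case: (ltngtP i k) => [ik|ki|/val_inj ->] //; apply/eqP; rewrite -subr_eq0.
  - by apply/eqP; rewrite -[RHS]oppr0 -(cross i k ik); ring.
  - by apply/eqP; rewrite -(cross k i ki); ring.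
exists y, lam; split=> //.
move/eqP: dist; rewrite subr_eq0 => /eqP <-.
rewrite /himp mulr_sumr; apply: eq_bigr => i _.
by rewrite xz addrC addKr exprMn.
Qed.

Lemma vanish_psi_offset (p : mpoly R 4) :
  (forall z, psi_proj P0 Pv n beta z -> meval p z = 0) ->
  forall z, offset_proj f z -> meval p z = 0.
Proof.
move=> p_psi z /offset_proj_normal [y [lam [fy xz dz]]].
pose S i := MAdd (MX i) (MMul (MC lam) (mderiv i f)).
pose AB := msplit (MMul (MC (lam ^+ 2)) himp_poly) S p.
have pE z' y' : dcoord z' ^+ 2 = lam ^+ 2 * himp f y' ->
    (forall i, xcoord z' i = y' i + lam * meval (mderiv i f) y') ->
    meval p z' = meval AB.1 y' + dcoord z' * meval AB.2 y'.
  by move=> dz' xz'; apply: msplitE => [|i]; rewrite /= ?meval_himp_poly -?xz'.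
have AB_Ppt t : meval regular_par t != 0 ->
    meval AB.1 (Ppt P0 Pv t) = 0 /\ (lam != 0 -> meval AB.2 (Ppt P0 Pv t) = 0).
  move=> reg; set d := lam * sqrtC (himp f (Ppt P0 Pv t)).
  have vanish_at (s : R) : s ^+ 2 = d ^+ 2 ->
      meval AB.1 (Ppt P0 Pv t) + s * meval AB.2 (Ppt P0 Pv t) = 0.
    move=> sd; rewrite exprMn sqrtCK in sd.
    set x := fun i => Ppt P0 Pv t i + lam * meval (mderiv i f) (Ppt P0 Pv t).
    rewrite -(dcoord_offset_point s x) -pE.
    - exact/p_psi/psi_proj_normal_point.
    - by rewrite dcoord_offset_point.
    - by move=> i; rewrite xcoord_offset_point.
  have [A0 dB0] := even_odd_eq0 (vanish_at d erefl) (vanish_at (- d) (sqrrN d)).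
  split=> // lam0; move/eqP: dB0; rewrite mulf_eq0 => /orP [|/eqP //].
  by rewrite mulf_eq0 (negbTE lam0) sqrtC_eq0 (negbTE (himp_Ppt_neq0 reg)).
rewrite (pE z y) // (vanish_on_surface (fun t reg => (AB_Ppt t reg).1) fy) add0r.
have [lam0|lam_neq0] := eqVneq lam 0.
  by move: dz; rewrite lam0 expr0n mul0r => /eqP; rewrite expf_eq0 => /eqP ->; rewrite mul0r.
by rewrite (vanish_on_surface (fun t reg => (AB_Ppt t reg).2 lam_neq0) fy) mulr0.
Qed.

End ParametrizedOffset.

Theorem mainTheorem13 (R : numClosedFieldType)
  (f : mpoly R 3) (P0 : mpoly R 2) (Pv : 'I_3 -> mpoly R 2)
  (g : mpoly R 2) (n : 'I_3 -> mpoly R 2) (mu : nat) (beta : mpoly R 2) :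
  (* f irreducible, h_imp not identically zero on Sigma *)
  mirreducible f ->
  (exists y, meval f y = 0 /\ himp f y != 0) ->
  (* P = (P1/P0, P2/P0, P3/P0) with gcd(P0,...,P3) = 1 *)
  ~ mzero P0 ->
  (forall d, mdvd d P0 -> (forall i, mdvd d (Pv i)) -> mconst d) ->
  (* the image of P is Zariski dense in Sigma = V(f) *)
  (forall y, zclosure (fun y' => exists t, meval P0 t != 0 /\ (forall i, y' i = Ppt P0 Pv t i)) y
             <-> meval f y = 0) ->
  (* n_i = A_i / gcd(A_1, A_2, A_3) *)
  (forall i t, meval (Acomp P0 Pv i) t = meval g t * meval (n i) t) ->
  (forall d, (forall i, mdvd d (n i)) -> mconst d) ->
  (* beta nonzero, gcd(beta, P0) = 1, f_i(P(t)) = beta P0^{-mu} n_i *)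
  ~ mzero beta ->
  (forall d, mdvd d beta -> mdvd d P0 -> mconst d) ->
  (forall i t, meval P0 t != 0 ->
     meval (mderiv i f) (Ppt P0 Pv t) * meval P0 t ^+ mu
     = meval beta t * meval (n i) t) ->
  forall z : 'I_4 -> R,
    generic_offset f z <-> zclosure (psi_proj P0 Pv n beta) z.
Proof.
move=> _ himp_generic P0_neq0 _ param_dense _ _ beta_neq0 _ grad_param z; split.
- apply: zclosure_le => p.
  exact: (vanish_psi_offset param_dense grad_param himp_generic P0_neq0 beta_neq0).
- apply: zclosureS => z'.
  exact: (psi_proj_sub_offset param_dense grad_param).
Qed.
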